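(* Let $h$ be a super solution. Then for every $R>0$, $\theta\in(0,1)$ and all $\tau\ge\tau_0\ge0$, $$\int_{[0,R]}h(\tau,x)dx\ge(1-\theta)\int_{[0,\theta R]}h(\tau_0,x)dx.$$
   Context: $\mathscr M_+([0,\infty))$ is the set of nonnegative finite Radon measures on $[0,\infty)$; we write $\int_A\varphi(x)h(x)dx$ for $\int_A\varphi\,dh$. $C^1_b([0,\infty))$ denotes bounded $C^1$ functions with bounded derivative. For continuous $\varphi$: $\Lambda(\varphi)(x,y)=\varphi(x+y)+\varphi(|x-y|)-2\varphi(\max\{x,y\})$ and $\mathscr Q_3^{(2)}(\varphi,h)=\iint_{(0,\infty)^2}\frac{\Lambda(\varphi)(x,y)}{\sqrt{xy}}h(x)h(y)dxdy$ (which is $\ge0$, possibly $+\infty$, for convex $\varphi$). Super solution: a map $h:[0,\infty)\to\mathscr M_+([0,\infty))$ such that for every nonnegative, convex, nonincreasing $\varphi\in C^1_b([0,\infty))$, the map $\tau\mapsto\int\varphi(x)h(\tau,x)dx$ is locally absolutely continuous on $[0,\infty)$ and $\frac{d}{d\tau}\int\varphi(x)h(\tau,x)dx\ge\mathscr Q_3^{(2)}(\varphi,h(\tau))$ for a.e. $\tau>0$. *)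

From HB Require Import structures.
From mathcomp Require Import all_boot all_order all_algebra.
From mathcomp Require Import all_classical all_reals all_analysis.
Set Implicit Arguments. Unset Strict Implicit. Unset Printing Implicit Defensive.
Import Order.TTheory GRing.Theory Num.Theory.
Import numFieldNormedType.Exports.
Local Open Scope classical_set_scope.
Local Open Scope ring_scope.

(* An element of M_+([0,oo)): a finite (hence Radon) Borel measure on R that
   gives no mass to (-oo,0). *)
Definition supported_on_nonneg (R : realType)
    (mu : {finite_measure set R -> \bar R}) : Prop :=
  mu [set` `]-oo, 0[] = 0%E.

Definition Lam (R : realType) (phi : R -> R) (x y : R) : R :=
  phi (x + y) + phi `|x - y| - 2 * phi (Num.max x y).

Definition Q32 (R : realType) (phi : R -> R)
    (mu : {finite_measure set R -> \bar R}) : \bar R :=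
  (\int[(mu \x mu)%E]_(z in [set z : R * R | 0 < z.1 /\ 0 < z.2]%R)
     ((Lam phi z.1 z.2) / Num.sqrt (z.1 * z.2))%:E)%E.

Definition C1b_nonneg (R : realType) (phi : R -> R) : Prop :=
  (exists M : R, forall x, 0 <= x -> `|phi x| <= M) /\
  {within `[0, +oo[, continuous phi} /\
  exists dphi : R -> R,
    {within `[0, +oo[, continuous dphi} /\
    (exists M : R, forall x, 0 <= x -> `|dphi x| <= M) /\
    (forall x : R, 0 < x -> is_derive x (1 : R) phi (dphi x)).

Definition convex_nonneg (R : realType) (phi : R -> R) : Prop :=
  forall x y t : R, 0 <= x -> 0 <= y -> 0 <= t <= 1 ->
    phi (t * x + (1 - t) * y) <= t * phi x + (1 - t) * phi y.

Definition nonincreasing_nonneg (R : realType) (phi : R -> R) : Prop :=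
  forall x y : R, 0 <= x -> x <= y -> phi y <= phi x.

Definition test_fun (R : realType) (phi : R -> R) : Prop :=
  (forall x, 0 <= x -> 0 <= phi x) /\ convex_nonneg phi /\
  nonincreasing_nonneg phi /\ C1b_nonneg phi.

Definition abs_cont_on (R : realType) (f : R -> R) (a b : R) : Prop :=
  forall e : R, 0 < e -> exists2 d : R, 0 < d &
    forall (n : nat) (x y : 'I_n -> R),
      (forall i, a <= x i /\ x i <= y i /\ y i <= b) ->
      (forall i j, i != j -> y i <= x j \/ y j <= x i) ->
      \sum_(i < n) (y i - x i) < d ->
      \sum_(i < n) `|f (y i) - f (x i)| < e.

Definition loc_abs_cont_nonneg (R : realType) (f : R -> R) : Prop :=
  forall b : R, 0 <= b -> abs_cont_on f 0 b.

Definition moment (R : realType) (h : R -> {finite_measure set R -> \bar R})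
    (phi : R -> R) (tau : R) : R :=
  fine (\int[h tau]_(x in [set` `[0%R, +oo[%R]) (phi x)%:E)%E.

Definition super_solution (R : realType)
    (h : R -> {finite_measure set R -> \bar R}) : Prop :=
  (forall tau, 0 <= tau -> supported_on_nonneg (h tau)) /\
  forall phi : R -> R, test_fun phi ->
    loc_abs_cont_nonneg (moment h phi) /\
    {ae (@lebesgue_measure R), forall tau : R, 0 < tau ->
       derivable (moment h phi) tau (1 : R) /\
       (Q32 phi (h tau) <= (derive1 (moment h phi) tau)%:E)%E}.

From HB Require Import structures.
From mathcomp Require Import all_boot all_order all_algebra.
From mathcomp Require Import all_classical all_reals all_analysis.
From mathcomp Require Import ring lra measurable_realfun.
Import Order.TTheory GRing.Theory Num.Theory.
Import numFieldNormedType.Exports.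
Local Open Scope classical_set_scope.
Local Open Scope ring_scope.

(** The test function [ramp r d x = (r - x) + sqrt ((r - x)^2 + d^2)] is a smooth, convex,
    nonincreasing approximation of [2 (r - x)_+], hence admissible.  For convex test functions
    [Lam phi >= 0], so [Q32 phi (h tau) >= 0] and the super-solution inequality makes the
    locally absolutely continuous moment [tau |-> \int ramp h(tau)] have a.e. nonnegative
    derivative; such a function is nondecreasing.  Since [ramp >= 2 (1 - theta) r] on
    [[0, theta r]], [ramp <= 2 r + d] on [[0, r]] and [ramp <= d] on [(r, +oo)], this yields
    [2 (1 - theta) r h(tau0)[0, theta r] <= (2 r + d) h(tau)[0, r] + d h(tau)(r, +oo)],
    and letting [d -> 0] gives the claim. *)

Lemma is_derive1_continuous (R : realType) (f : R -> R) (x df : R) :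
  is_derive x 1 f df -> {for x, continuous f}.
Proof. by move=> [fx _]; apply/differentiable_continuous/derivable1_diffP. Qed.

Lemma ler_of_linear_slack (R : realFieldType) (x y k : R) :
  0 <= k -> (forall d, 0 < d -> x <= y + d * k) -> x <= y.
Proof.
move=> k0 slack; apply/ler_addgt0Pr => e e0.
have k1 : 0 < k + 1 by lra.
have := slack (e / (k + 1)) (divr_gt0 e0 k1).
have : e / (k + 1) * k <= e by rewrite mulrAC ler_pdivrMr // ler_pM2l //; lra.
lra.
Qed.

Lemma real_induction (R : realType) (a b : R) (P : R -> Prop) : a <= b -> P a ->
  (forall x, a <= x <= b -> exists2 r, 0 < r & forall y z,
     a <= y -> y <= x -> x <= z -> z <= b -> x - r < y -> z < x + r -> P y -> P z) ->
  P b.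
Proof.
move=> ab Pa step.
(* [c := sup A] is the point up to which [P] is known; the step at [c] carries [P] past [c]. *)
pose A := [set x | a <= x <= b /\ forall t, a <= t <= x -> P t].
have Aa : A a.
  by split=> [|t /andP[a_t t_a]]; [rewrite lexx ab | rewrite (@le_anti _ _ t a) ?a_t ?t_a].
have supA : has_sup A by split; [exists a | exists b => x [/andP[]]].
set c := sup A.
have ac : a <= c by exact: sup_upper_bound.
have cb : c <= b by apply: ge_sup; [exists a | move=> x [/andP[]]].
have [r r0 stepc] := step c ltac:(by rewrite ac cb).
have P_lt_c t : a <= t -> t < c -> P t.
  move=> a_t tc; have ct : 0 < c - t by rewrite subr_gt0.
  have [x [_ Px] tx] := sup_adherent ct supA.
  by apply: Px; rewrite a_t /=; rewrite /c in tx; lra.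
have P_near_c t : a <= t -> t <= b -> t < c + r -> P t.
  move=> a_t tb tcr; case: (ltP t c) => [|ct]; first exact: P_lt_c.
  have [x Ax xc] := sup_adherent r0 supA; have [/andP[ax _] Px] := Ax.
  by apply: (stepc x) => //; [exact: sup_upper_bound | apply: Px; rewrite ax lexx].
case: (ltP b (c + r)) => bcr; first exact: P_near_c.
have : A (c + r / 2).
  split=> [|t /andP[a_t tc]]; first by apply/andP; split; lra.
  by apply: P_near_c => //; lra.
by move/(sup_upper_bound supA); rewrite -/c; lra.
Qed.

Section abs_cont_nondecreasing.
Variable R : realType.
Local Notation mu := (@lebesgue_measure R).

Lemma negligible_open_cover (N : set R) (e : R) : mu.-negligible N -> 0 < e ->
  exists U, [/\ open U, N `<=` U & (mu U < e%:E)%E].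
Proof.
move=> [A [mA A0 NA]] e0.
have [U [oU AU UAe]] : exists U : set R, [/\ open U, A `<=` U & (mu (U `\` A) < e%:E)%E].
  by apply: lebesgue_regularity_outer; rewrite // [X in (X < _)%E](_ : _ = 0%E) ?ltry.
exists U; split => //; first exact: subset_trans AU.
have mUA : measurable (U `\` A) by apply: measurableD => //; exact: open_measurable.
rewrite -(setDUK AU); apply: le_lt_trans (measureU2 _ mA mUA) _.
by rewrite [X in (X + _)%E](_ : _ = 0%E) ?add0e.
Qed.

Lemma derive1_ge0_slope (f : R -> R) (x e : R) :
  derivable f x 1 -> 0 <= derive1 f x -> 0 < e ->
  exists2 r, 0 < r & forall y z, x - r < y -> y <= x -> x <= z -> z < x + r ->
    f y - f z <= e * (z - y).
Proof.
move=> df f'x e0.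
have [r r0 slope] : exists2 r, 0 < r &
    forall t, `|t - x| < r -> t != x -> - e <= (f t - f x) / (t - x).
  move/cvgr_dist_lt: df => /(_ _ e0) [r /= r0 near_f'x].
  exists r => // t tx tNx; have := near_f'x (t - x); rewrite /= sub0r normrN => /(_ tx).
  rewrite subr_eq0 => /(_ tNx); rewrite /= [_%:A]mulr1 subrK [_ *: _]mulrC ltr_norml.
  by move: f'x; rewrite derive1E /derive; set L := lim _ => f'x /andP[_]; lra.
exists r => // y z ry yx xz zr.
have fz : f x - f z <= e * (z - x).
  have [->|zNx] := eqVneq z x; first by rewrite !subrr mulr0.
  have zx : 0 < z - x by rewrite subr_gt0 lt_def zNx xz.
  have := slope z; rewrite gtr0_norm // ler_pdivlMr //; lra.
have fy : f y - f x <= e * (x - y).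
  have [->|yNx] := eqVneq y x; first by rewrite !subrr mulr0.
  have yx' : y - x < 0 by rewrite subr_lt0 lt_neqAle yNx yx.
  have := slope y; rewrite ltr0_norm // ler_ndivlMr //; lra.
lra.
Qed.

Section creeping.
Variables (f : R -> R) (a e : R) (U : set R).
Hypotheses (e_ge0 : 0 <= e) (mU : measurable U).

(* Invariant of the creeping induction along [[a, b]]: the intervals [(X i, Y i]] are the
   steps taken inside the small open set [U], so their total length is at most [mu U]; on
   every other step [f] decreased at slope at most [e]. *)
Definition creeping_bound (z : R) := exists n (X Y : nat -> R), [/\
  forall i, (i < n)%N -> [/\ a <= X i, X i <= Y i & Y i <= z],
  forall i j, (i < n)%N -> (j < n)%N -> i != j -> Y i <= X j \/ Y j <= X i,
  ((\sum_(i < n) (Y i - X i))%:E <= mu (U `&` `]-oo, z]))%E &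
  f a - e * (z - a) - \sum_(i < n) `|f (Y i) - f (X i)| <= f z].

Lemma creeping_bound_start : creeping_bound a.
Proof.
exists 0%N, (fun=> 0), (fun=> 0); split=> //; rewrite big_ord0 ?measure_ge0 //.
by rewrite subrr mulr0; lra.
Qed.

Lemma creeping_bound_slow y z : y <= z -> f y - f z <= e * (z - y) ->
  creeping_bound y -> creeping_bound z.
Proof.
move=> yz slow [n [X [Y [XY disj len bound]]]]; exists n, X, Y; split => //.
- by move=> i /XY[aX XY_i Yy]; split => //; exact: le_trans Yy yz.
- apply: (le_trans len); apply: le_measure; rewrite ?inE; try by apply: measurableI.
  by move=> t [Ut]; rewrite /= !in_itv /= => ty; split => //; exact: le_trans yz.
- lra.
Qed.

Lemma creeping_bound_open y z : a <= y -> y <= z -> `]y, z] `<=` U ->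
  creeping_bound y -> creeping_bound z.
Proof.
move=> ay yz yzU [n [X [Y [XY disj len bound]]]].
pose X' i := if i == n then y else X i; pose Y' i := if i == n then z else Y i.
have X'E (i : 'I_n) : X' i = X i by rewrite /X' (ltn_eqF (ltn_ord i)).
have Y'E (i : 'I_n) : Y' i = Y i by rewrite /Y' (ltn_eqF (ltn_ord i)).
exists n.+1, X', Y'; split.
- move=> i; rewrite ltnS leq_eqVlt /X' /Y' => /predU1P[->|ilt]; first by rewrite eqxx.
  rewrite (ltn_eqF ilt); have [aX XY_i Yy] := XY i ilt; split => //; exact: le_trans Yy yz.
- move=> i j; rewrite /X' /Y' !ltnS [(i <= n)%N]leq_eqVlt [(j <= n)%N]leq_eqVlt.
  move=> /predU1P[->|ilt] /predU1P[->|jlt]; rewrite ?eqxx ?(ltn_eqF ilt) ?(ltn_eqF jlt) //.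
  + by move=> _; right; have [_ _] := XY j jlt.
  + by move=> _; left; have [_ _] := XY i ilt.
  + exact: disj.
- rewrite big_ord_recr /= (eq_bigr _ (fun i _ => congr2 _ (Y'E i) (congr1 _ (X'E i)))).
  rewrite /X' /Y' eqxx EFinD.
  have yz_len : ((z - y)%:E <= mu `]y, z])%E.
    rewrite lebesgue_measure_itv /= lte_fin -EFinD; case: ifPn => // yNz.
    by rewrite lee_fin subr_le0 leNgt.
  apply: (le_trans (leeD len yz_len)); rewrite -measureU //; last first.
  + rewrite -subset0 => t [[_ /=]]; rewrite !in_itv /= => ty /andP[yt _].
    by move: (lt_le_trans yt ty); rewrite ltxx.
  + by apply: measurableI.
  apply: le_measure; rewrite ?inE; try by [apply: measurableU; [apply: measurableI|]].
  + by apply: measurableI.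
  move=> t [[Ut]|tyz]; rewrite /= !in_itv /=.
    by move=> ty; split => //; exact: le_trans yz.
  by split; [exact: yzU | move: tyz; rewrite /= in_itv /= => /andP[]].
- rewrite big_ord_recr /= /X' /Y' eqxx.
  rewrite (eq_bigr _ (fun i _ => congr2 (fun u v => `|f u - f v|) (Y'E i) (X'E i))).
  have : 0 <= e * (z - y) by rewrite mulr_ge0 ?subr_ge0.
  have : f y - f z <= `|f z - f y| by rewrite distrC ler_norm.
  lra.
Qed.

End creeping.

Lemma abs_cont_derive1_ge0_approx (f : R -> R) (a b e : R) (N : set R) :
  a <= b -> 0 < e -> abs_cont_on f a b -> mu.-negligible N ->
  (forall x, a <= x <= b -> ~ N x -> derivable f x 1 /\ 0 <= derive1 f x) ->
  f a - e * (b - a + 1) <= f b.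
Proof.
move=> ab e0 acf nN f'_ge0.
have [delta delta0 ac_delta] := acf e e0.
have [U [oU NU mUd]] := negligible_open_cover _ _ nN delta0.
have mU : measurable U by exact: open_measurable.
have : creeping_bound f a e U b.
  apply: (@real_induction _ a b (creeping_bound f a e U) ab (creeping_bound_start f a e U)).
  move=> x /andP[ax xb].
  have [Ux|nUx] := pselect (U x).
    have [r /= r0 ballU] := (nbhs_ballP _ _).1 (oU x Ux).
    exists r => // y z ay yx xz zb ry zr.
    apply: creeping_bound_open => //; [exact: ltW | exact: le_trans xz | move=> t].
    rewrite /= in_itv /= => /andP[yt tz]; apply: ballU.
    by rewrite /ball /= ltr_norml; apply/andP; split; lra.
  have [df f'x] := f'_ge0 x ltac:(by rewrite ax xb) (fun Nx => nUx (NU x Nx)).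
  have [r r0 slow] := derive1_ge0_slope f x e df f'x e0.
  exists r => // y z ay yx xz zb ry zr.
  by apply: creeping_bound_slow => //; [exact: le_trans xz | exact: slow].
move=> [n [X [Y [XY disj len bound]]]].
have len_delta : \sum_(i < n) (Y i - X i) < delta.
  rewrite -lte_fin; apply: (le_lt_trans len); apply: le_lt_trans mUd.
  by apply: le_measure; rewrite ?inE //; apply: measurableI.
have var_e : \sum_(i < n) `|f (Y i) - f (X i)| < e.
  apply: (ac_delta n (fun i => X i) (fun i => Y i)) => //.
    by move=> i; have [aX XY_i Yb] := XY i (ltn_ord i).
  by move=> i j; exact: disj (ltn_ord i) (ltn_ord j).
lra.
Qed.

Lemma abs_cont_derive1_ge0_le (f : R -> R) (a b : R) (N : set R) :
  a <= b -> abs_cont_on f a b -> mu.-negligible N ->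
  (forall x, a <= x <= b -> ~ N x -> derivable f x 1 /\ 0 <= derive1 f x) ->
  f a <= f b.
Proof.
move=> ab acf nN f'_ge0; apply/ler_addgt0Pr => e e0.
have ba1 : 0 < b - a + 1 by lra.
have := @abs_cont_derive1_ge0_approx f a b (e / (b - a + 1)) N ab (divr_gt0 e0 ba1) acf nN f'_ge0.
by rewrite divfK ?gt_eqF //; lra.
Qed.

End abs_cont_nondecreasing.

Lemma abs_cont_onS (R : realType) (f : R -> R) (a b c d : R) :
  c <= a -> b <= d -> abs_cont_on f c d -> abs_cont_on f a b.
Proof.
move=> ca bd acf e e0; have [delta delta0 ac_delta] := acf e e0.
exists delta => // n x y xy; apply: ac_delta => i.
by have [ax [xy_i yb]] := xy i; split; [exact: le_trans ax | split; [|exact: le_trans bd]].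
Qed.

Section integral_bounds.
Context {d} {T : measurableType d} {R : realType} {mu : {measure set T -> \bar R}}.
Local Open Scope ereal_scope.

Lemma integral_le_cst (D : set T) (f : T -> R) (c : R) :
  measurable D -> measurable_fun D f -> (forall x, D x -> 0 <= f x <= c)%R ->
  \int[mu]_(x in D) (f x)%:E <= c%:E * mu D.
Proof.
move=> mD mf f0c; rewrite -integral_cst //; apply: ge0_le_integral => //.
- by move=> x Dx; rewrite lee_fin; case/andP: (f0c x Dx).
- exact/measurable_EFinP.
- by move=> x Dx; rewrite lee_fin; case/andP: (f0c x Dx).
Qed.

Lemma integral_ge_cst (D E : set T) (f : T -> R) (c : R) :
  measurable D -> measurable E -> D `<=` E -> measurable_fun E f ->
  (forall x, E x -> 0 <= f x)%R -> (0 <= c)%R -> (forall x, D x -> c <= f x)%R ->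
  c%:E * mu D <= \int[mu]_(x in E) (f x)%:E.
Proof.
move=> mD mE DE mf f0 c0 cf; rewrite -integral_cst //.
apply: (@le_trans _ _ (\int[mu]_(x in D) (f x)%:E)).
  apply: ge0_le_integral => //.
  by apply/measurable_EFinP; exact: measurable_funS mf.
apply: ge0_subset_integral => //; first exact/measurable_EFinP.
Qed.

Lemma integral_setU_le_cst (D1 D2 : set T) (f : T -> R) (c1 c2 : R) :
  measurable D1 -> measurable D2 -> [disjoint D1 & D2] ->
  measurable_fun (D1 `|` D2) f ->
  (forall x, D1 x -> 0 <= f x <= c1)%R -> (forall x, D2 x -> 0 <= f x <= c2)%R ->
  \int[mu]_(x in D1 `|` D2) (f x)%:E <= c1%:E * mu D1 + c2%:E * mu D2.
Proof.
move=> mD1 mD2 D12 mf f1 f2.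
have f0 x : (D1 `|` D2) x -> 0 <= (f x)%:E.
  by rewrite lee_fin => -[/f1|/f2] /andP[].
rewrite (ge0_integral_setU _ mD1 mD2 _ f0 D12); last exact/measurable_EFinP.
have mD12 : measurable (D1 `|` D2) by exact: measurableU.
by apply: leeD; apply: integral_le_cst => //; apply: measurable_funS mf => // x; by [left|right].
Qed.

Lemma integral_fin_num_bounded (D : set T) (f : T -> R) (c : R) :
  mu D \is a fin_num -> measurable D -> measurable_fun D f ->
  (forall x, D x -> 0 <= f x <= c)%R -> \int[mu]_(x in D) (f x)%:E \is a fin_num.
Proof.
move=> muD mD mf f0c; rewrite ge0_fin_numE.
  apply: (le_lt_trans (integral_le_cst _ _ _ mD mf f0c)).
  by rewrite -(fineK muD) -EFinM ltry.
by apply: integral_ge0 => x Dx; rewrite lee_fin; case/andP: (f0c x Dx).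
Qed.

End integral_bounds.

Section ramp.
Context {R : realType}.
Variables (r d : R).
Hypothesis d_gt0 : 0 < d.

Definition hypot (s : R) := Num.sqrt (s ^+ 2 + d ^+ 2).

Lemma hypot_gt0 s : 0 < hypot s.
Proof. by rewrite sqrtr_gt0 ltr_wpDl ?sqr_ge0 ?exprn_gt0. Qed.

Lemma hypotK s : hypot s ^+ 2 = s ^+ 2 + d ^+ 2.
Proof. by rewrite sqr_sqrtr // addr_ge0 ?sqr_ge0. Qed.

Lemma normr_le_hypot s : `|s| <= hypot s.
Proof. by rewrite /hypot -sqrtr_sqr ler_sqrt ?lerDl ?sqr_ge0 // addr_ge0 ?sqr_ge0. Qed.

Lemma hypot_le s : hypot s <= `|s| + d.
Proof.
have d0 := ltW d_gt0.
rewrite /hypot -[leRHS]ger0_norm ?addr_ge0 // -sqrtr_sqr ler_sqrt ?sqr_ge0 //.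
rewrite sqrrD (real_normK (num_real s)); have := mulr_ge0 (normr_ge0 s) d0.
lra.
Qed.

Lemma hypot_convex s s' t : 0 <= t <= 1 ->
  hypot (t * s + (1 - t) * s') <= t * hypot s + (1 - t) * hypot s'.
Proof.
move=> /andP[t0 t1].
have cauchy : s * s' + d ^+ 2 <= hypot s * hypot s'.
  rewrite /hypot -sqrtrM ?addr_ge0 ?sqr_ge0 // (le_trans (ler_norm _)) //.
  rewrite -sqrtr_sqr ler_sqrt ?mulr_ge0 ?addr_ge0 ?sqr_ge0 //.
  have := mulr_ge0 (sqr_ge0 d) (sqr_ge0 (s - s')); nra.
have := hypotK s; have := hypotK s'; have := hypot_gt0 s; have := hypot_gt0 s'.
move: cauchy; set A := hypot s; set B := hypot s' => cauchy B0 A0 B2 A2.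
rewrite -[leRHS]ger0_norm; last by rewrite addr_ge0 ?mulr_ge0 ?subr_ge0 // ltW.
rewrite -sqrtr_sqr ler_sqrt ?sqr_ge0 //.
have : 0 <= t * (1 - t) by rewrite mulr_ge0 // subr_ge0.
nra.
Qed.

Lemma is_derive_hypot (s : R) : is_derive s (1 : R) hypot (s / hypot s).
Proof.
have hs : is_derive s (1 : R) (fun u : R => u ^+ 2 + d ^+ 2) (2 * s).
  by apply: is_derive_eq; rewrite /GRing.scale /=; ring.
have hsq : 0 < s ^+ 2 + d ^+ 2 by rewrite -hypotK exprn_gt0 ?hypot_gt0.
have := @is_derive1_comp _ Num.sqrt _ s _ _ (is_derive1_sqrt hsq) hs.
have -> : s / hypot s = (2 * hypot s)^-1 * (2 * s).
  by field; rewrite gt_eqF ?hypot_gt0.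
exact.
Qed.

Lemma continuous_hypot : continuous hypot.
Proof. by move=> s; apply: is_derive1_continuous (is_derive_hypot s). Qed.

Lemma hypot_sub_le s s' : s' <= s -> hypot s' - hypot s <= s - s'.
Proof.
move=> le_s's; have := hypotK s; have := hypotK s'.
have := normr_le_hypot s; have := normr_le_hypot s'.
have := hypot_gt0 s; have := hypot_gt0 s'.
set A := hypot s; set B := hypot s' => B0 A0 nB nA B2 A2.
have : 0 <= (s - s') * (A + B + s + s').
  by rewrite mulr_ge0 ?subr_ge0 //; have := ler_norm (- s); have := ler_norm (- s');
     rewrite !normrN; lra.
nra.
Qed.

Definition ramp x := r - x + hypot (r - x).
Definition ramp' x := - 1 - (r - x) / hypot (r - x).

Lemma is_derive_ramp x : is_derive x (1 : R) ramp (ramp' x).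
Proof.
have hs : is_derive x (1 : R) (fun y => r - y) (- 1).
  by apply: is_derive_eq; rewrite /GRing.scale /=; ring.
have hf : is_derive (r - x) (1 : R) (fun s => s + hypot s) (1 + (r - x) / hypot (r - x)).
  exact: is_deriveD (is_derive_hypot _).
have := @is_derive1_comp _ _ _ x _ _ hf hs.
by rewrite /ramp' mulrN1 opprD; exact.
Qed.

Lemma ramp_ge x : 2 * (r - x) <= ramp x.
Proof. by rewrite /ramp; have := normr_le_hypot (r - x); have := ler_norm (r - x); lra. Qed.

Lemma ramp_ge0 x : 0 <= ramp x.
Proof.
by rewrite /ramp; have := normr_le_hypot (r - x); have := ler_norm (- (r - x)); rewrite normrN; lra.
Qed.

Lemma ramp_le x : ramp x <= r - x + `|r - x| + d.
Proof. by rewrite /ramp; have := hypot_le (r - x); lra. Qed.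

Lemma ramp_nonincreasing x y : x <= y -> ramp y <= ramp x.
Proof. by move=> le_xy; rewrite /ramp; have := @hypot_sub_le (r - x) (r - y); lra. Qed.

Lemma ramp_convex x y t : 0 <= t <= 1 ->
  ramp (t * x + (1 - t) * y) <= t * ramp x + (1 - t) * ramp y.
Proof.
move=> t01; rewrite /ramp.
have -> : r - (t * x + (1 - t) * y) = t * (r - x) + (1 - t) * (r - y) by ring.
have := hypot_convex (r - x) (r - y) t t01; lra.
Qed.

Lemma continuous_ramp : continuous ramp.
Proof. by move=> x; apply: is_derive1_continuous (is_derive_ramp x). Qed.

Lemma continuous_ramp' : continuous ramp'.
Proof.
have ch : continuous (fun s : R => s / hypot s).
  move=> s; apply: (continuousM (s := id) (t := fun s => (hypot s)^-1)) => //.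
  by apply: continuousV; [rewrite gt_eqF ?hypot_gt0 | exact: continuous_hypot].
move=> x; rewrite /ramp'; apply: cvgB; first exact: cvg_cst.
have crx : {for x, continuous (fun y : R => r - y)}.
  by apply: cvgB; [exact: cvg_cst | exact: cvg_id].
exact: (continuous_comp crx (ch (r - x))).
Qed.

Lemma ramp'_bounded x : `|ramp' x| <= 2.
Proof.
have : `|(r - x) / hypot (r - x)| <= 1.
  by rewrite normrM normfV (gtr0_norm (hypot_gt0 _)) ler_pdivrMr ?hypot_gt0 // mul1r normr_le_hypot.
by rewrite /ramp'; have := ler_normB (-1) ((r - x) / hypot (r - x)); rewrite normrN1; lra.
Qed.

Lemma test_fun_ramp : test_fun ramp.
Proof.
split; first by move=> x _; exact: ramp_ge0.
split; first by move=> x y t _ _; exact: ramp_convex.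
split; first by move=> x y _; exact: ramp_nonincreasing.
split.
  by exists (ramp 0) => x x0; rewrite ger0_norm ?ramp_ge0 ?ramp_nonincreasing.
split; first exact: continuous_subspaceT continuous_ramp.
exists ramp'; split; first exact: continuous_subspaceT continuous_ramp'.
by split; [exists 2 => x _; exact: ramp'_bounded | move=> x _; exact: is_derive_ramp].
Qed.

End ramp.

Section ramp_integrals.
Context {R : realType} {mu : {measure set R -> \bar R}} {r d : R}.
Hypotheses (r_gt0 : 0 < r) (d_gt0 : 0 < d).

Lemma measurable_ramp (D : set R) : measurable_fun D (ramp r d).
Proof. apply: measurable_funTS; exact: continuous_measurable_fun (continuous_ramp r d d_gt0). Qed.

Lemma ramp_integral_le : (\int[mu]_(x in [set` `[0%R, +oo[%R]) (ramp r d x)%:E <=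
  (2 * r + d)%:E * mu [set` `[0%R, r]%R] + d%:E * mu [set` `]r, +oo[%R])%E.
Proof.
rewrite (@itv_bndbnd_setU _ _ _ (BRight r)) ?bnd_simp ?(ltW r_gt0) //.
apply: integral_setU_le_cst => //.
- rewrite disj_set2E; apply/eqP; rewrite -subset0 => x [/=].
  by rewrite !in_itv /= => /andP[_ xr] /andP[rx _]; move: (lt_le_trans rx xr); rewrite ltxx.
- exact: measurable_ramp.
- move=> x /=; rewrite in_itv /= => /andP[x0 xr]; rewrite ramp_ge0 //=.
  by have := ramp_le r d d_gt0 x; rewrite ger0_norm ?subr_ge0 //; lra.
- move=> x /=; rewrite in_itv /= andbT => rx; rewrite ramp_ge0 //=.
  have := ramp_le r d d_gt0 x; rewrite ler0_norm; first lra.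
  by rewrite subr_le0; exact: ltW.
Qed.

Lemma ramp_integral_ge (theta : R) : 0 <= theta <= 1 ->
  ((2 * (1 - theta) * r)%:E * mu [set` `[0%R, theta * r]%R] <=
   \int[mu]_(x in [set` `[0%R, +oo[%R]) (ramp r d x)%:E)%E.
Proof.
move=> /andP[theta0 theta1]; apply: integral_ge_cst => //.
- by move=> x /=; rewrite !in_itv /= andbT => /andP[].
- exact: measurable_ramp.
- by move=> x _; exact: ramp_ge0.
- by rewrite !mulr_ge0 ?subr_ge0 ?(ltW r_gt0).
- by move=> x /=; rewrite in_itv /= => /andP[_ xtr]; have := ramp_ge r d x; lra.
Qed.

End ramp_integrals.

Lemma moment_ramp (R : realType) (h : R -> {finite_measure set R -> \bar R}) (r d tau : R) :
  0 < d ->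
  (moment h (ramp r d) tau)%:E = (\int[h tau]_(x in [set` `[0%R, +oo[%R]) (ramp r d x)%:E)%E.
Proof.
move=> d0; rewrite /moment fineK //.
apply: (integral_fin_num_bounded _ _ (ramp r d 0)) => //.
- exact: fin_num_measure.
- exact: measurable_ramp.
- by move=> x /=; rewrite in_itv /= andbT => x0; rewrite ramp_ge0 ramp_nonincreasing.
Qed.

Section super_solution_moments.
Context {R : realType}.

Lemma Lam_ge0 (phi : R -> R) (x y : R) : convex_nonneg phi -> 0 < x -> 0 < y ->
  0 <= Lam phi x y.
Proof.
move=> cvx x0 y0; rewrite /Lam.
wlog yx : x y x0 y0 / y <= x.
  move=> sym; case/orP: (le_total y x) => [|xy]; first exact: sym.
  by rewrite maxC (addrC x y) distrC; exact: sym.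
rewrite (max_l yx) ger0_norm ?subr_ge0 //.
have := cvx (x + y) (x - y) (1 / 2) ltac:(lra) ltac:(lra) ltac:(apply/andP; split; lra).
have -> : 1 / 2 * (x + y) + (1 - 1 / 2) * (x - y) = x by field.
lra.
Qed.

Lemma Q32_ge0 (phi : R -> R) (mu : {finite_measure set R -> \bar R}) :
  convex_nonneg phi -> (0 <= Q32 phi mu)%E.
Proof.
move=> cvx; apply: integral_ge0 => z [z1 z2].
by rewrite lee_fin divr_ge0 ?sqrtr_ge0 ?Lam_ge0.
Qed.

Lemma super_solution_moment_le (h : R -> {finite_measure set R -> \bar R}) (phi : R -> R)
    (t0 t : R) :
  super_solution h -> test_fun phi -> 0 <= t0 -> t0 <= t ->
  moment h phi t0 <= moment h phi t.
Proof.
move=> [_ hs] phi_test t00 t0t; have [acf ae] := hs phi phi_test.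
(* The point [0] is added because the super-solution inequality is only known for [tau > 0]. *)
pose bad := ~` [set tau | 0 < tau ->
  derivable (moment h phi) tau 1 /\ (Q32 phi (h tau) <= (derive1 (moment h phi) tau)%:E)%E].
apply: (@abs_cont_derive1_ge0_le _ _ _ _ (bad `|` [set 0])) => //.
- exact: abs_cont_onS t00 (lexx t) (acf t (le_trans t00 t0t)).
- apply: negligibleU => //.
  by apply/negligibleP; [exact: measurable_set1 | exact: lebesgue_measure_set1].
move=> x /andP[t0x _] /not_orP[/contrapT good /eqP x0].
have x_gt0 : 0 < x by rewrite lt_def x0 (le_trans t00 t0x).
have [dx Q32_le] := good x_gt0.
split => //; rewrite -lee_fin; apply: le_trans Q32_le.
exact: Q32_ge0 phi_test.2.1.
Qed.

End super_solution_moments.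

Theorem mainTheorem11 (R : realType) (h : R -> {finite_measure set R -> \bar R}) :
  super_solution h ->
  forall (Rr theta tau0 tau : R), 0 < Rr -> 0 < theta < 1 ->
    0 <= tau0 -> tau0 <= tau ->
    (h tau [set` `[0, Rr]%R] >= (1 - theta)%:E * h tau0 [set` `[0, theta * Rr]%R])%E.
Proof.
move=> hs r th t0 t r0 /andP[th0 th1] t00 t0t.
set A := h t _; set B := h t [set` `]r, +oo[%R]; set C := h t0 _.
have [finA finB finC] : [/\ A \is a fin_num, B \is a fin_num & C \is a fin_num].
  by split; apply: fin_num_measure.
have moment_bound d : 0 < d -> ((2 * (1 - th) * r)%:E * C <= (2 * r + d)%:E * A + d%:E * B)%E.
  move=> d0; have := super_solution_moment_le h _ t0 t hs (test_fun_ramp r d d0) t00 t0t.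
  rewrite -lee_fin !moment_ramp // => mono.
  have th01 : 0 <= th <= 1 by rewrite !ltW.
  exact: le_trans (ramp_integral_ge r0 d0 th th01) (le_trans mono (ramp_integral_le r0 d0)).
have r2 : 0 < 2 * r by rewrite mulr_gt0.
rewrite -(fineK finA) -(fineK finC) -EFinM lee_fin -(ler_pM2l r2).
apply: (@ler_of_linear_slack _ _ _ (fine A + fine B)).
  by rewrite addr_ge0 ?fine_ge0 ?measure_ge0.
move=> d d0; move: (moment_bound d d0).
rewrite -(fineK finA) -(fineK finB) -(fineK finC) -!EFinM -EFinD lee_fin.
nra.
Qed.
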